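(* Let $\mathcal{D}$ be an $S(2,k,v)$ on element set $V$ and $G_1=1$-$\mathrm{BIG}(\mathcal{D})$. (a) If $\mathcal{D}$ has a parallel class, then $\alpha(G_1)=v/k$, and for every $\alpha$-set $I$ of $G_1$, every vertex of $V(G_1)\setminus I$ is adjacent to exactly $k$ vertices of $I$; in particular $|X_1|=\dots=|X_{k-1}|=0$ and $|X_k|=\frac{v(v-k)}{k(k-1)}$. (b) If $\mathcal{D}$ has a near parallel class, then $\alpha(G_1)=(v-1)/k$, and for every $\alpha$-set $I$, every vertex of $V(G_1)\setminus I$ is adjacent to either $k-1$ or $k$ vertices of $I$, with $|X_1|=\dots=|X_{k-2}|=0$, $|X_{k-1}|=\frac{v-1}{k-1}$ and $|X_k|=\frac{(v-1)(v-2k+1)}{k(k-1)}$.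
   Context: A Steiner $2$-design $S(2,k,v)$ ($2<k<v$) is a pair $(V,\mathcal{B})$ with $|V|=v$ and $\mathcal{B}$ a collection of $k$-subsets of $V$ (blocks) such that every $2$-subset of $V$ lies in exactly one block. A partial parallel class is a set of pairwise disjoint blocks; a parallel class is a set of blocks partitioning $V$; a near parallel class is a partial parallel class whose union is $V$ minus a single element. The $1$-block intersection graph $1$-$\mathrm{BIG}(\mathcal{D})$ has the blocks as vertices, two blocks adjacent iff they intersect in exactly one element. $\alpha(G)$ is the independence number and an $\alpha$-set is a maximum independent set. For an $\alpha$-set $I$ of a graph $G$ and $i\ge1$, $X_i$ is the set of vertices $u\in V(G)\setminus I$ adjacent to exactly $i$ vertices of $I$. *)

From mathcomp Require Import all_boot.
Set Implicit Arguments. Unset Strict Implicit. Unset Printing Implicit Defensive.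

Section Design.
Variable V : finType.

Definition steiner2 (k : nat) (B : {set {set V}}) : Prop :=
  [/\ 2 < k, k < #|V|,
      (forall b, b \in B -> #|b| = k) &
      (forall x y : V, x != y -> #|[set b in B | (x \in b) && (y \in b)]| = 1)].

Definition partial_parallel_class (B P : {set {set V}}) : Prop :=
  P \subset B /\
  (forall b1 b2, b1 \in P -> b2 \in P -> b1 != b2 -> [disjoint b1 & b2]).

Definition parallel_class (B P : {set {set V}}) : Prop :=
  partial_parallel_class B P /\ cover P = [set: V].

Definition near_parallel_class (B P : {set {set V}}) : Prop :=
  partial_parallel_class B P /\ exists x : V, cover P = [set: V] :\ x.

(* adjacency in the 1-block intersection graph 1-BIG(D) on vertex set B *)
Definition big1_adj (b1 b2 : {set V}) : bool := #|b1 :&: b2| == 1.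

Definition big1_independent (B I : {set {set V}}) : bool :=
  (I \subset B) &&
  [forall b1 in I, forall b2 in I, (b1 != b2) ==> ~~ big1_adj b1 b2].

Definition big1_alpha (B : {set {set V}}) : nat :=
  \max_(I : {set {set V}} | big1_independent B I) #|I|.

Definition big1_alpha_set (B I : {set {set V}}) : Prop :=
  big1_independent B I /\ #|I| = big1_alpha B.

Definition nbI (I : {set {set V}}) (u : {set V}) : nat :=
  #|[set b in I | big1_adj u b]|.

Definition Xset (B I : {set {set V}}) (i : nat) : {set {set V}} :=
  [set u in B :\: I | nbI I u == i].

End Design.

From mathcomp Require Import all_boot zify.
Set Implicit Arguments. Unset Strict Implicit. Unset Printing Implicit Defensive.

(* Two distinct blocks share at most one point, so an independent set I of
   1-BIG is a partial parallel class, and a block u outside I is adjacent to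
   exactly one member of I for each point of u covered by I.  Comparing
   k * alpha with v shows that an alpha-set covers every point (parallel
   case) or every point but one, z (near parallel case).  Hence each block
   outside I has k neighbours in I, except the r = (v - 1)/(k - 1) blocks
   through z, which have k - 1; the sizes of the X_i then follow from the
   block count b k (k - 1) = v (v - 1). *)

Lemma card_set_sum (T : finType) (p q : pred T) :
  #|[set a | p a && q a]| = \sum_(a | p a) q a.
Proof. by rewrite -big_mkcondr -sum1_card; apply: eq_bigl => a; rewrite inE. Qed.

Lemma card_setI_sum (T : finType) (A C : {set T}) :
  #|A :&: C| = \sum_(x in A) (x \in C).
Proof. by rewrite -card_set_sum; apply: eq_card => x; rewrite !inE. Qed.

Section OneBlockIntersectionGraph.
Variables (V : finType) (k : nat) (B : {set {set V}}).
Hypothesis HS : steiner2 k B.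

Lemma steiner2_k_gt2 : 2 < k.
Proof. by case: HS. Qed.

Lemma card_block b : b \in B -> #|b| = k.
Proof. by case: HS => _ _ Hk _; apply: Hk. Qed.

Lemma card_blocks_through_pair x y :
  x != y -> #|[set b in B | (x \in b) && (y \in b)]| = 1.
Proof. by case: HS => _ _ _; apply. Qed.

Lemma card_setI_blocks_le1 b1 b2 :
  b1 \in B -> b2 \in B -> b1 != b2 -> #|b1 :&: b2| <= 1.
Proof.
move=> b1B b2B b12; rewrite leqNgt; apply/card_gt1P => -[x [y []]].
rewrite !inE => /andP[xb1 xb2] /andP[yb1 yb2] xy.
have : [set b1; b2] \subset [set b in B | (x \in b) && (y \in b)].
  by apply/subsetP => b; rewrite !inE => /orP[]/eqP->; apply/and3P.
by move/subset_leq_card; rewrite cards2 b12 card_blocks_through_pair.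
Qed.

Lemma big1_independent_sub I : big1_independent B I -> I \subset B.
Proof. by case/andP. Qed.

Lemma big1_independent_disjoint I : big1_independent B I ->
  {in I &, forall b1 b2 : {set V}, b1 != b2 -> [disjoint b1 & b2]}.
Proof.
move=> HI b1 b2 b1I b2I b12; have /subsetP sIB := big1_independent_sub HI.
case/andP: HI => _ /forall_inP/(_ _ b1I)/forall_inP/(_ _ b2I).
rewrite b12 /= /big1_adj -setI_eq0 -cards_eq0 => /negbTE nadj.
have := card_setI_blocks_le1 (sIB _ b1I) (sIB _ b2I) b12.
by rewrite leq_eqVlt nadj ltnS leqn0.
Qed.

Lemma partial_parallel_class_independent P :
  partial_parallel_class B P -> big1_independent B P.
Proof.
case=> sPB dP; apply/andP; split=> //.
apply/forall_inP => b1 b1P; apply/forall_inP => b2 b2P; apply/implyP => b12.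
by have := dP _ _ b1P b2P b12; rewrite -setI_eq0 /big1_adj => /eqP->; rewrite cards0.
Qed.

Lemma card_cover_independent I : big1_independent B I -> #|cover I| = #|I| * k.
Proof.
move=> HI; have /trivIsetP/eqP <- := big1_independent_disjoint HI.
rewrite -sum_nat_const; apply: eq_bigr => b bI.
exact/card_block/(subsetP (big1_independent_sub HI)).
Qed.

Lemma leq_card_big1_alpha I : big1_independent B I -> #|I| <= big1_alpha B.
Proof. exact: (@leq_bigmax_cond _ (big1_independent B) (fun J => #|J|)). Qed.

Lemma big1_alpha_ub : k * big1_alpha B <= #|V|.
Proof.
have k_gt0 : 0 < k by have := steiner2_k_gt2; lia.
rewrite mulnC -leq_divRL //; apply/bigmax_leqP => I HI.
by rewrite leq_divRL // -card_cover_independent // max_card.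
Qed.

Lemma card_cover_independent_alpha I :
  big1_alpha_set B I -> #|cover I| = k * big1_alpha B.
Proof. by case=> HI <-; rewrite card_cover_independent // mulnC. Qed.

Lemma sum_mem_independent I x : big1_independent B I ->
  \sum_(b in I) (x \in b) = (x \in cover I).
Proof.
move=> HI; have [/bigcupP[b0 b0I xb0]|xnI] := boolP (x \in cover I).
  rewrite (bigD1 b0) //= xb0 big1 // => b /andP[bI bb0].
  apply/eqP; rewrite eqb0; apply: contraTN xb0 => xb.
  by have /disjointFr-> := big1_independent_disjoint HI bI b0I bb0.
rewrite big1 // => b bI; apply/eqP; rewrite eqb0.
by apply: contraNN xnI => xb; apply/bigcupP; exists b.
Qed.

Lemma nbI_card_cover I u : big1_independent B I -> u \in B :\: I ->
  nbI I u = #|u :&: cover I|.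
Proof.
move=> HI; rewrite inE => /andP[uI uB].
rewrite card_setI_sum.
under eq_bigr => x _ do rewrite -(sum_mem_independent x HI).
rewrite exchange_big /nbI card_set_sum; apply: eq_bigr => b bI.
rewrite -card_setI_sum /big1_adj.
have ub : u != b by apply: contraNneq uI => ->.
have := card_setI_blocks_le1 uB (subsetP (big1_independent_sub HI) _ bI) ub.
by case: #|_| => [|[|]].
Qed.

Lemma card_blocks_through x : #|[set b in B | x \in b]| * (k - 1) = #|V| - 1.
Proof.
rewrite [RHS]subn1 -(cardsC1 x) -[RHS]sum1_card.
transitivity (\sum_(y in [set~ x]) #|[set b in B | (x \in b) && (y \in b)]|); last first.
  by apply: eq_bigr => y; rewrite !inE eq_sym => /card_blocks_through_pair.
under [RHS]eq_bigr => y _.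
  rewrite (_ : [set b in B | _] = [set b | ((b \in B) && (x \in b)) && (y \in b)]).
    by rewrite card_set_sum; over.
  by apply/setP => b; rewrite !inE andbA.
rewrite exchange_big /= -sum_nat_const; apply: eq_big => [b|b]; first by rewrite inE.
rewrite inE => /andP[bB xb]; rewrite -card_setI_sum setIC -setDE.
by rewrite -(card_block bB) (cardsD1 x b) xb add1n subn1.
Qed.

Lemma card_blocks : #|B| * (k * (k - 1)) = #|V| * (#|V| - 1).
Proof.
rewrite -sum_nat_const (eq_bigr (fun b => #|[set: V] :&: b| * (k - 1))); last first.
  by move=> b bB; rewrite setTI card_block.
rewrite -big_distrl /=.
under eq_bigr => b _ do rewrite card_setI_sum.
rewrite exchange_big /= big_distrl /= -sum_nat_const.
apply: eq_big => [x|x _]; first by rewrite inE.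
by rewrite -(card_blocks_through x) (card_set_sum (mem B)).
Qed.

Lemma card_setD_alpha_set I : big1_alpha_set B I -> #|B :\: I| = #|B| - big1_alpha B.
Proof. by case=> /big1_independent_sub sIB <-; rewrite cardsD (setIidPr sIB). Qed.

Lemma Xset_eq0 I i : (forall u, u \in B :\: I -> nbI I u != i) -> Xset B I i = set0.
Proof.
move=> Hi; apply/setP => u; rewrite in_set0 inE.
by apply/negbTE/andP => -[/Hi/negP].
Qed.

Lemma big1_alpha_parallel_class :
  (exists P, parallel_class B P) -> k * big1_alpha B = #|V|.
Proof.
case=> P [/partial_parallel_class_independent HP covP].
apply/eqP; rewrite eqn_leq big1_alpha_ub -cardsT -covP.
by rewrite card_cover_independent // mulnC leq_mul2l leq_card_big1_alpha ?orbT.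
Qed.

Lemma big1_alpha_near_parallel_class :
  (exists P, near_parallel_class B P) -> k * big1_alpha B = #|V| - 1.
Proof.
case=> P [/partial_parallel_class_independent HP [x covP]].
have cardP : #|P| * k = #|V| - 1.
  by rewrite -card_cover_independent // covP setTD cardsC1 subn1.
have := leq_card_big1_alpha HP; rewrite leq_eqVlt => /orP[/eqP <-|ltPa].
  by rewrite mulnC.
have := big1_alpha_ub; have := steiner2_k_gt2.
have : k * #|P|.+1 <= k * big1_alpha B by rewrite leq_mul2l ltPa orbT.
rewrite mulnS mulnC cardP; lia.
Qed.

Lemma cover_alpha_set_parallel_class I : (exists P, parallel_class B P) ->
  big1_alpha_set B I -> cover I = [set: V].
Proof.
move=> /big1_alpha_parallel_class aeq HI.
by apply/eqP; rewrite eqEcard subsetT cardsT (card_cover_independent_alpha HI) aeq leqnn.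
Qed.

Lemma cover_alpha_set_near_parallel_class I : (exists P, near_parallel_class B P) ->
  big1_alpha_set B I -> exists z, cover I = [set~ z].
Proof.
move=> /big1_alpha_near_parallel_class aeq HI.
have v_gt0 : 0 < #|V| by case: HS => _ kv _ _; lia.
have /cards1P[z covI] : #|~: cover I| == 1.
  by apply/eqP; have := cardsC (cover I); rewrite (card_cover_independent_alpha HI) aeq; lia.
by exists z; rewrite -covI setCK.
Qed.

Section ParallelClass.
Variable I : {set {set V}}.
Hypotheses (HI : big1_alpha_set B I) (covI : cover I = [set: V]).

Lemma nbI_cover_setT u : u \in B :\: I -> nbI I u = k.
Proof.
move=> uBI; have uB : u \in B by case/setDP: uBI.
by rewrite nbI_card_cover ?covI ?setIT ?card_block //; case: HI.
Qed.

Lemma Xset_cover_setT : Xset B I k = B :\: I.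
Proof. by apply/setP => u; rewrite inE andb_idr // => /nbI_cover_setT->. Qed.

Lemma Xset_cover_setT_eq0 i : i != k -> Xset B I i = set0.
Proof. by move=> ik; apply: Xset_eq0 => u /nbI_cover_setT->; rewrite eq_sym. Qed.

Lemma card_Xset_cover_setT : #|Xset B I k| * (k * (k - 1)) = #|V| * (#|V| - k).
Proof.
have aeq : k * big1_alpha B = #|V|.
  by rewrite -(card_cover_independent_alpha HI) covI cardsT.
rewrite Xset_cover_setT card_setD_alpha_set // mulnBl card_blocks.
rewrite mulnA [_ * k]mulnC aeq -mulnBr; congr (_ * _).
by have := steiner2_k_gt2; lia.
Qed.

End ParallelClass.

Section NearParallelClass.
Variables (I : {set {set V}}) (z : V).
Hypotheses (HI : big1_alpha_set B I) (covI : cover I = [set~ z]).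

Lemma block_through_uncovered b : b \in B -> z \in b -> b \in B :\: I.
Proof.
move=> bB zb; rewrite inE bB andbT; apply/negP => bI.
have : z \in cover I by apply/bigcupP; exists b.
by rewrite covI !inE eqxx.
Qed.

Lemma nbI_cover_setC1 u : u \in B :\: I -> nbI I u = k - (z \in u).
Proof.
move=> uBI; have uB : u \in B by case/setDP: uBI.
rewrite nbI_card_cover //; last by case: HI.
by rewrite covI -setDE -(card_block uB) (cardsD1 z u) addKn.
Qed.

Lemma Xset_cover_setC1_pred : Xset B I (k - 1) = [set b in B | z \in b].
Proof.
apply/setP => u; rewrite inE [RHS]inE.
apply/andP/andP => [[uBI]|[uB zu]]; last first.
  by have uBI := block_through_uncovered uB zu; rewrite nbI_cover_setC1 ?zu.
rewrite nbI_cover_setC1 //; case: (z \in u) => [_|]; first by case/setDP: uBI.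
by rewrite subn0 => /eqP; have := steiner2_k_gt2; lia.
Qed.

Lemma Xset_cover_setC1 : Xset B I k = (B :\: I) :\: [set b in B | z \in b].
Proof.
apply/setP => u; rewrite inE [RHS]inE [RHS]andbC; case uBI: (u \in B :\: I) => //=.
have uB : u \in B by case/setDP: uBI.
rewrite nbI_cover_setC1 // inE uB; case: (z \in u); last by rewrite subn0 eqxx.
by apply/negbTE/eqP; have := steiner2_k_gt2; lia.
Qed.

Lemma Xset_cover_setC1_eq0 i : i != k - 1 -> i != k -> Xset B I i = set0.
Proof.
move=> ik1 ik; apply: Xset_eq0 => u /nbI_cover_setC1->.
by case: (z \in u); rewrite ?subn0 eq_sym.
Qed.

Lemma card_Xset_cover_setC1 :
  #|Xset B I k| * (k * (k - 1)) = (#|V| - 1) * (#|V| + 1 - 2 * k).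
Proof.
have aeq : k * big1_alpha B = #|V| - 1.
  by rewrite -(card_cover_independent_alpha HI) covI cardsC1 subn1.
have sub : [set b in B | z \in b] \subset B :\: I.
  by apply/subsetP => b; rewrite inE => /andP[]; apply: block_through_uncovered.
rewrite Xset_cover_setC1 cardsD (setIidPr sub) card_setD_alpha_set //.
rewrite [LHS]mulnBl [in LHS]mulnBl card_blocks mulnA [_ * k]mulnC aeq.
rewrite mulnCA card_blocks_through (mulnC #|V|) (mulnC k) -!mulnBr; congr (_ * _).
by have := steiner2_k_gt2; lia.
Qed.

End NearParallelClass.

End OneBlockIntersectionGraph.

Theorem mainTheorem5 (V : finType) (k : nat) (B : {set {set V}}) :
  steiner2 k B ->
  ((exists P, parallel_class B P) ->
     k * big1_alpha B = #|V| /\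
     (forall I, big1_alpha_set B I ->
        [/\ (forall u, u \in B :\: I -> nbI I u = k),
            (forall i, (1 <= i <= k - 1) -> #|Xset B I i| = 0) &
            #|Xset B I k| * (k * (k - 1)) = #|V| * (#|V| - k)])) /\
  ((exists P, near_parallel_class B P) ->
     k * big1_alpha B = #|V| - 1 /\
     (forall I, big1_alpha_set B I ->
        [/\ (forall u, u \in B :\: I -> nbI I u = k - 1 \/ nbI I u = k),
            (forall i, (1 <= i <= k - 2) -> #|Xset B I i| = 0),
            #|Xset B I (k - 1)| * (k - 1) = #|V| - 1 &
            #|Xset B I k| * (k * (k - 1)) = (#|V| - 1) * (#|V| + 1 - 2 * k)])).
Proof.
move=> HS; have k_gt2 := steiner2_k_gt2 HS; split=> HP.
- split=> [|I HI]; first exact: big1_alpha_parallel_class HP.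
  have covI := cover_alpha_set_parallel_class HS HP HI.
  split.
  + exact (nbI_cover_setT HS HI covI).
  + by move=> i /andP[_ ik]; rewrite (Xset_cover_setT_eq0 HS HI covI) ?cards0 //; lia.
  + exact (card_Xset_cover_setT HS HI covI).
- split=> [|I HI]; first exact: big1_alpha_near_parallel_class HP.
  have [z covI] := cover_alpha_set_near_parallel_class HS HP HI.
  split.
  + move=> u /(nbI_cover_setC1 HS HI covI)->.
    by case: (z \in u); [left | right; rewrite subn0].
  + by move=> i /andP[_ ik]; rewrite (Xset_cover_setC1_eq0 HS HI covI) ?cards0 //; lia.
  + by rewrite (Xset_cover_setC1_pred HS HI covI) card_blocks_through.
  + exact (card_Xset_cover_setC1 HS HI covI).
Qed.
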